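(* Given a Spherical Diagram $\mathcal D$, every great circle on the unit sphere is crossed by at least three distinct arcs of $\mathcal D$.
   Context: A geodesic arc on the unit sphere in $\mathbb R^3$ is the unique shortest curve joining two non-antipodal points. An arc $a$ blocks an arc $b$ (equivalently, $b$ hits $a$) if an endpoint of $b$ lies in the relative interior of $a$. A Spherical Diagram (SD) is a finite non-empty collection $\mathcal D$ of pairwise interior-disjoint geodesic arcs on the unit sphere such that each arc of $\mathcal D$ is blocked by arcs of $\mathcal D$ at each of its endpoints. An arc $a$ crosses a curve $\gamma$ if $a\cap\gamma$ contains an isolated point $x$ in the relative interior of $a$ such that every neighborhood of $x$ contains points of $\gamma$ on both sides of $a$. *)

From Stdlib Require Import Reals List.
Open Scope R_scope.

Record V3 := mkV { vx : R; vy : R; vz : R }.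

Definition vzero : V3 := mkV 0 0 0.
Definition vadd (u v : V3) : V3 := mkV (vx u + vx v) (vy u + vy v) (vz u + vz v).
Definition vscale (c : R) (u : V3) : V3 := mkV (c * vx u) (c * vy u) (c * vz u).
Definition vopp (u : V3) : V3 := mkV (- vx u) (- vy u) (- vz u).
Definition vsub (u v : V3) : V3 := vadd u (vopp v).
Definition dot (u v : V3) : R := vx u * vx v + vy u * vy v + vz u * vz v.
Definition cross (u v : V3) : V3 :=
  mkV (vy u * vz v - vz u * vy v) (vz u * vx v - vx u * vz v) (vx u * vy v - vy u * vx v).
Definition dist (u v : V3) : R := sqrt (dot (vsub u v) (vsub u v)).

Definition on_sphere (x : V3) : Prop := dot x x = 1.

Record arc := mkArc { ep1 : V3; ep2 : V3 }.

Definition valid_arc (a : arc) : Prop :=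
  on_sphere (ep1 a) /\ on_sphere (ep2 a) /\ ep1 a <> ep2 a /\ ep1 a <> vopp (ep2 a).

(* points of the (minor, i.e. shortest) geodesic arc: unit vectors in the cone
   spanned by the two endpoints *)
Definition in_arc (a : arc) (x : V3) : Prop :=
  on_sphere x /\ exists al be, 0 <= al /\ 0 <= be /\
    x = vadd (vscale al (ep1 a)) (vscale be (ep2 a)).

Definition in_relint (a : arc) (x : V3) : Prop :=
  on_sphere x /\ exists al be, 0 < al /\ 0 < be /\
    x = vadd (vscale al (ep1 a)) (vscale be (ep2 a)).

Definition blocks (a b : arc) : Prop := in_relint a (ep1 b) \/ in_relint a (ep2 b).

Definition spherical_diagram (D : list arc) : Prop :=
  D <> nil /\
  (forall a, In a D -> valid_arc a) /\
  (forall a b, In a D -> In b D -> a <> b ->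
     forall x, ~ (in_relint a x /\ in_relint b x)) /\
  (forall b, In b D ->
     (exists a, In a D /\ in_relint a (ep1 b)) /\
     (exists a, In a D /\ in_relint a (ep2 b))).

(* the great circle with (nonzero) normal vector n *)
Definition on_gc (n x : V3) : Prop := on_sphere x /\ dot n x = 0.

(* arc a crosses the great circle with normal n: a /\ gamma contains an isolated
   point x in the relative interior of a such that every neighbourhood of x
   contains points of gamma on both sides of a (sides of the great circle
   through a, i.e. the sign of  (ep1 a x ep2 a) . y). *)
Definition crosses (a : arc) (n : V3) : Prop :=
  exists x, in_relint a x /\ on_gc n x /\
    (exists eps, 0 < eps /\ forall y, in_arc a y -> on_gc n y -> dist y x < eps -> y = x) /\
    (forall eps, 0 < eps ->
       (exists y, on_gc n y /\ dist y x < eps /\ dot (cross (ep1 a) (ep2 a)) y > 0) /\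
       (exists y, on_gc n y /\ dist y x < eps /\ dot (cross (ep1 a) (ep2 a)) y < 0)).

From Pilot Require Import Defs.
From Stdlib Require Import Reals List Lra Classical.
Open Scope R_scope.

(* An arc whose endpoints lie strictly on opposite sides of the great circle
   C = {n.x = 0} crosses C, at the normalised positive combination of its
   endpoints lying on C.  Suppose at most two arcs do so.  Then some m != 0 in
   the plane of C has m.c <= 0 at every crossing point c.  If an endpoint lies
   in the open hemisphere n.x > 0, tilt the plane m.x = 0 about C: with
   M = max (m.p / n.p) over such endpoints p, the vector w = m - M n satisfies
   w.q <= 0 for every endpoint q of the closed hemisphere, with equality at a
   maximiser p.  The arc blocking p cannot leave the half-space w.x <= 0
   inside the hemisphere, so it lies on the great circle w.x = 0, and so does
   the arc blocking its endpoint in the open hemisphere.  Of two arcs on one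
   great circle neither can block the other without overlapping it, which
   contradicts interior-disjointness.  Applied to n and -n this puts every
   endpoint on C, where the same overlap argument gives the contradiction. *)

Lemma V3_ext (u v : V3) : vx u = vx v -> vy u = vy v -> vz u = vz v -> u = v.
Proof. destruct u, v; simpl; intros; subst; reflexivity. Qed.

Ltac V3_ring := apply V3_ext; unfold vadd, vsub, vscale, vopp, cross, vzero, dot; simpl.

Lemma dot_addl u v w : dot (vadd u v) w = dot u w + dot v w.
Proof. unfold dot; simpl; ring. Qed.
Lemma dot_addr u v w : dot w (vadd u v) = dot w u + dot w v.
Proof. unfold dot; simpl; ring. Qed.
Lemma dot_scalel c u w : dot (vscale c u) w = c * dot u w.
Proof. unfold dot; simpl; ring. Qed.
Lemma dot_scaler c u w : dot w (vscale c u) = c * dot w u.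
Proof. unfold dot; simpl; ring. Qed.
Lemma dot_oppl u w : dot (vopp u) w = - dot u w.
Proof. unfold dot; simpl; ring. Qed.
Lemma dot_oppr u w : dot w (vopp u) = - dot w u.
Proof. unfold dot; simpl; ring. Qed.
Lemma dot_subl u v w : dot (vsub u v) w = dot u w - dot v w.
Proof. unfold vsub; rewrite dot_addl, dot_oppl; ring. Qed.
Lemma dot_subr u v w : dot w (vsub u v) = dot w u - dot w v.
Proof. unfold vsub; rewrite dot_addr, dot_oppr; ring. Qed.
Lemma dot_comm u v : dot u v = dot v u.
Proof. unfold dot; ring. Qed.

Hint Rewrite dot_addl dot_addr dot_scalel dot_scaler dot_subl dot_subr dot_oppl dot_oppr : vec.

Lemma dot_self_ge0 u : 0 <= dot u u.
Proof. unfold dot; nra. Qed.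

Lemma dot_self_eq0 u : dot u u = 0 -> u = vzero.
Proof. unfold dot; intro H; V3_ring; nra. Qed.

Lemma dot_self_gt0 u : u <> vzero -> 0 < dot u u.
Proof.
  intro Hu; destruct (dot_self_ge0 u) as [|H]; [assumption|].
  now destruct (Hu (dot_self_eq0 u (eq_sym H))).
Qed.

Lemma vsub_eq0 u v : vsub u v = vzero -> u = v.
Proof.
  intro E; pose proof (f_equal vx E); pose proof (f_equal vy E); pose proof (f_equal vz E).
  simpl in *; apply V3_ext; lra.
Qed.

Lemma vopp_neq0 u : u <> vzero -> vopp u <> vzero.
Proof.
  intros Hu E; apply Hu; pose proof (f_equal vx E); pose proof (f_equal vy E); pose proof (f_equal vz E).
  simpl in *; V3_ring; lra.
Qed.

Lemma vadd_comm u v : vadd u v = vadd v u.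
Proof. V3_ring; ring. Qed.

Lemma dot_cross_cross a b c d : dot (cross a b) (cross c d) = dot a c * dot b d - dot a d * dot b c.
Proof. unfold cross, dot; simpl; ring. Qed.

Lemma dot_cross_l a b : dot (cross a b) a = 0.
Proof. unfold cross, dot; simpl; ring. Qed.

Lemma dot_cross_r a b : dot (cross a b) b = 0.
Proof. unfold cross, dot; simpl; ring. Qed.

Lemma perp_plane_parallel e1 e2 v : dot v e1 = 0 -> dot v e2 = 0 ->
  vscale (dot (cross e1 e2) (cross e1 e2)) v = vscale (dot v (cross e1 e2)) (cross e1 e2).
Proof.
  intros H1 H2; set (W := cross e1 e2).
  assert (E : vsub (vscale (dot W W) v) (vscale (dot v W) W)
              = cross W (vsub (vscale (dot v e2) e1) (vscale (dot v e1) e2)))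
    by (unfold W; V3_ring; ring).
  rewrite H1, H2 in E; apply vsub_eq0; rewrite E; V3_ring; ring.
Qed.

Definition unit (c : V3) : V3 := vscale (/ sqrt (dot c c)) c.

Lemma unit_on_sphere c : 0 < dot c c -> on_sphere (unit c).
Proof.
  intro Hc; unfold on_sphere, unit; autorewrite with vec.
  pose proof (sqrt_lt_R0 _ Hc); rewrite <- (sqrt_sqrt (dot c c)) at 3 by lra.
  field; lra.
Qed.

Lemma unit_unique c y l : on_sphere y -> 0 <= l -> y = vscale l c -> y = unit c.
Proof.
  unfold on_sphere, unit; intros Hy Hl ->; autorewrite with vec in Hy.
  assert (Hc : 0 < dot c c) by (pose proof (dot_self_ge0 c); nra).
  pose proof (sqrt_lt_R0 _ Hc) as HS; pose proof (sqrt_sqrt _ (Rlt_le _ _ Hc)) as HSS.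
  set (S := sqrt (dot c c)) in *.
  assert (HlS : l * S = 1).
  { rewrite <- HSS in Hy; assert (0 <= l * S) by (apply Rmult_le_pos; lra); nra. }
  f_equal; apply (Rmult_eq_reg_r S); [rewrite HlS; field|]; lra.
Qed.

Definition arc_comb (a : arc) (al be : R) : V3 :=
  vadd (vscale al (ep1 a)) (vscale be (ep2 a)).

Lemma valid_arc_dot_bounds a : valid_arc a -> -1 < dot (ep1 a) (ep2 a) < 1.
Proof.
  intros (H1 & H2 & Hne & Hnopp); unfold on_sphere in H1, H2.
  assert (Hsub : vsub (ep1 a) (ep2 a) <> vzero) by (intro E; exact (Hne (vsub_eq0 _ _ E))).
  assert (Hadd : vsub (ep1 a) (vopp (ep2 a)) <> vzero) by (intro E; exact (Hnopp (vsub_eq0 _ _ E))).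
  apply dot_self_gt0 in Hsub, Hadd; autorewrite with vec in Hsub, Hadd.
  rewrite (dot_comm (ep2 a)) in Hsub, Hadd; lra.
Qed.

Lemma arc_comb_sqnorm_gt0 a al be : valid_arc a -> 0 < al -> 0 < be ->
  0 < dot (arc_comb a al be) (arc_comb a al be).
Proof.
  intros Ha Hal Hbe; pose proof (valid_arc_dot_bounds a Ha) as Hk.
  destruct Ha as (H1 & H2 & _); unfold on_sphere in H1, H2.
  unfold arc_comb; autorewrite with vec; rewrite (dot_comm (ep2 a)), H1, H2.
  assert (0 < al * be * (1 + dot (ep1 a) (ep2 a))) by (apply Rmult_lt_0_compat; nra).
  pose proof (Rle_0_sqr (al - be)); unfold Rsqr in *; nra.
Qed.

Lemma unit_arc_comb_relint a al be : valid_arc a -> 0 < al -> 0 < be ->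
  in_relint a (unit (arc_comb a al be)).
Proof.
  intros Ha Hal Hbe; pose proof (arc_comb_sqnorm_gt0 a al be Ha Hal Hbe) as Hc.
  split; [exact (unit_on_sphere _ Hc)|].
  pose proof (sqrt_lt_R0 _ Hc) as HS; unfold unit; set (S := sqrt _) in *.
  exists (al / S), (be / S); split; [apply Rdiv_lt_0_compat; lra|].
  split; [apply Rdiv_lt_0_compat; lra|].
  unfold arc_comb; V3_ring; field; lra.
Qed.

Lemma unit_not_pos_comb e1 e2 al be : dot e1 e1 = 1 -> dot e2 e2 = 1 ->
  -1 < dot e1 e2 < 1 -> 0 < be -> e1 <> vadd (vscale al e1) (vscale be e2).
Proof.
  intros H1 H2 Hk Hbe E.
  pose proof (f_equal (fun x => dot x e1) E) as E1; pose proof (f_equal (fun x => dot x e2) E) as E2.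
  cbv beta in E1, E2; autorewrite with vec in E1, E2; rewrite (dot_comm e2), H1 in E1; rewrite H2 in E2.
  assert (0 < be * (1 - dot e1 e2 * dot e1 e2)) by (apply Rmult_lt_0_compat; nra).
  nra.
Qed.

Lemma relint_not_endpoint a : valid_arc a -> ~ in_relint a (ep1 a) /\ ~ in_relint a (ep2 a).
Proof.
  intros Ha; pose proof (valid_arc_dot_bounds a Ha) as Hk.
  destruct Ha as (H1 & H2 & _); unfold on_sphere in H1, H2.
  split; intros (_ & al & be & Hal & Hbe & E).
  - exact (unit_not_pos_comb _ _ al be H1 H2 Hk Hbe E).
  - rewrite vadd_comm in E; rewrite dot_comm in Hk.
    exact (unit_not_pos_comb _ _ be al H2 H1 Hk Hal E).
Qed.

Lemma arc_plane_span a u r : valid_arc a -> u <> vzero ->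
  dot u (ep1 a) = 0 -> dot u (ep2 a) = 0 -> dot r u = 0 -> exists g d, r = arc_comb a g d.
Proof.
  intros Ha Hu Hu1 Hu2 Hr; pose proof (valid_arc_dot_bounds a Ha) as Hk.
  destruct Ha as (H1 & H2 & _); unfold on_sphere in H1, H2.
  set (e1 := ep1 a) in *; set (e2 := ep2 a) in *; set (k := dot e1 e2) in *.
  set (W := cross e1 e2).
  assert (HW : 0 < dot W W)
    by (unfold W; rewrite dot_cross_cross, H1, H2, (dot_comm e2); fold k; nra).
  (* [g e1 + d e2] is the orthogonal projection of [r] on the plane of [a]; the
     residual [v] is orthogonal to [e1], [e2] and [u], so it is parallel to
     [e1 x e2] like [u] and hence orthogonal to itself. *)
  set (g := (dot r e1 - k * dot r e2) / (1 - k * k)).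
  set (d := (dot r e2 - k * dot r e1) / (1 - k * k)).
  exists g, d; set (v := vsub r (arc_comb a g d)).
  assert (Hv1 : dot v e1 = 0)
    by (unfold v, arc_comb; autorewrite with vec; fold e1 e2;
        rewrite H1, (dot_comm e2); fold k; unfold g, d; field; nra).
  assert (Hv2 : dot v e2 = 0)
    by (unfold v, arc_comb; autorewrite with vec; fold e1 e2;
        rewrite H2; fold k; unfold g, d; field; nra).
  assert (Hvu : dot v u = 0)
    by (unfold v, arc_comb; autorewrite with vec; fold e1 e2;
        rewrite Hr, (dot_comm e1), (dot_comm e2), Hu1, Hu2; ring).
  pose proof (perp_plane_parallel e1 e2 u Hu1 Hu2) as Pu; fold W in Pu.
  pose proof (perp_plane_parallel e1 e2 v Hv1 Hv2) as Pv; fold W in Pv.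
  pose proof (f_equal (fun x => dot x u) Pu) as Puu; pose proof (f_equal (fun x => dot x u) Pv) as Pvu.
  pose proof (f_equal (fun x => dot x v) Pv) as Pvv.
  cbv beta in Puu, Pvu, Pvv; autorewrite with vec in Puu, Pvu, Pvv.
  rewrite Hvu, (dot_comm W u) in Pvu; rewrite (dot_comm W u) in Puu; rewrite (dot_comm W v) in Pvv.
  pose proof (dot_self_gt0 u Hu).
  assert (HuW : dot u W <> 0) by (intro E; rewrite E in Puu; pose proof (Rmult_lt_0_compat _ _ HW H); lra).
  assert (HvW : dot v W = 0) by (apply (Rmult_eq_reg_r (dot u W)); [lra|exact HuW]).
  rewrite HvW, Rmult_0_l in Pvv; apply vsub_eq0, dot_self_eq0; fold v.
  destruct (Rmult_integral _ _ Pvv) as [E | E]; [lra | exact E].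
Qed.

Lemma small_perturbation al be g d : 0 < al -> 0 < be ->
  exists t, 0 < t /\ 0 < al + t * g /\ 0 < be + t * d.
Proof.
  intros Hal Hbe.
  set (t := Rmin al be / (1 + Rabs g + Rabs d)).
  assert (Hm : 0 < Rmin al be) by (apply Rmin_pos; lra).
  pose proof (Rmin_l al be); pose proof (Rmin_r al be).
  pose proof (Rabs_pos g); pose proof (Rabs_pos d).
  pose proof (Rle_abs (- g)) as Hg; pose proof (Rle_abs (- d)) as Hd; rewrite Rabs_Ropp in Hg, Hd.
  assert (Ht : t * (1 + Rabs g + Rabs d) = Rmin al be) by (unfold t; field; lra).
  assert (0 < t) by (unfold t; apply Rdiv_lt_0_compat; lra).
  exists t; nra.
Qed.

Lemma relint_perturb_in_plane a u q r : valid_arc a -> u <> vzero ->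
  dot u (ep1 a) = 0 -> dot u (ep2 a) = 0 -> dot r u = 0 -> in_relint a q ->
  exists t, 0 < t /\ in_relint a (unit (vadd q (vscale t r))).
Proof.
  intros Ha Hu Hu1 Hu2 Hr (_ & al & be & Hal & Hbe & ->).
  destruct (arc_plane_span a u r Ha Hu Hu1 Hu2 Hr) as (g & d & ->).
  destruct (small_perturbation al be g d Hal Hbe) as (t & Ht & Hg & Hd).
  exists t; split; [exact Ht|].
  replace (vadd _ _) with (arc_comb a (al + t * g) (be + t * d)) by (unfold arc_comb; V3_ring; ring).
  now apply unit_arc_comb_relint.
Qed.

Lemma coplanar_not_blocks D a b u : spherical_diagram D -> In a D -> In b D -> u <> vzero ->
  dot u (ep1 a) = 0 -> dot u (ep2 a) = 0 -> dot u (ep1 b) = 0 -> dot u (ep2 b) = 0 ->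
  ~ blocks a b.
Proof.
  intros (_ & Hval & Hdisj & _) Ha Hb Hu Ha1 Ha2 Hb1 Hb2 Hblk.
  pose proof (Hval a Ha) as Hva; pose proof (Hval b Hb) as Hvb.
  assert (Hab : a <> b) by (intros ->; destruct (relint_not_endpoint b Hvb); unfold blocks in Hblk; tauto).
  assert (Hcommon : exists x, in_relint a x /\ in_relint b x).
  { destruct Hblk as [Hq | Hq].
    - rewrite dot_comm in Hb2.
      destruct (relint_perturb_in_plane a u _ _ Hva Hu Ha1 Ha2 Hb2 Hq) as (t & Ht & Hx).
      exists (unit (vadd (ep1 b) (vscale t (ep2 b)))); split; [exact Hx|].
      replace (vadd _ _) with (arc_comb b 1 t) by (unfold arc_comb; V3_ring; ring).
      apply unit_arc_comb_relint; auto; lra.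
    - rewrite dot_comm in Hb1.
      destruct (relint_perturb_in_plane a u _ _ Hva Hu Ha1 Ha2 Hb1 Hq) as (t & Ht & Hx).
      exists (unit (vadd (ep2 b) (vscale t (ep1 b)))); split; [exact Hx|].
      replace (vadd _ _) with (arc_comb b t 1) by (unfold arc_comb; V3_ring; ring).
      apply unit_arc_comb_relint; auto; lra. }
  destruct Hcommon as (x & Hx); exact (Hdisj a b Ha Hb Hab x Hx).
Qed.

Definition straddles (n : V3) (a : arc) : Prop := dot n (ep1 a) * dot n (ep2 a) < 0.

Definition crossing_dir (n : V3) (a : arc) : V3 :=
  arc_comb a (Rabs (dot n (ep2 a))) (Rabs (dot n (ep1 a))).

Lemma straddles_cases n a : straddles n a ->
  (0 < dot n (ep1 a) /\ dot n (ep2 a) < 0 /\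
     crossing_dir n a = arc_comb a (- dot n (ep2 a)) (dot n (ep1 a))) \/
  (dot n (ep1 a) < 0 /\ 0 < dot n (ep2 a) /\
     crossing_dir n a = arc_comb a (dot n (ep2 a)) (- dot n (ep1 a))).
Proof.
  unfold straddles, crossing_dir; intro Hs.
  destruct (Rtotal_order (dot n (ep1 a)) 0) as [Hneg | [Hz | Hpos]];
    [right | rewrite Hz in Hs; lra | left].
  - assert (0 < dot n (ep2 a)) by nra.
    rewrite (Rabs_right (dot n (ep2 a))), (Rabs_left (dot n (ep1 a))) by lra; auto.
  - assert (dot n (ep2 a) < 0) by nra.
    rewrite (Rabs_left (dot n (ep2 a))), (Rabs_right (dot n (ep1 a))) by lra; auto.
Qed.

Lemma straddles_opp n a : straddles (vopp n) a <-> straddles n a.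
Proof. unfold straddles; rewrite !dot_oppl; split; intro; lra. Qed.

Lemma crossing_dir_opp n a : crossing_dir (vopp n) a = crossing_dir n a.
Proof. unfold crossing_dir; now rewrite !dot_oppl, !Rabs_Ropp. Qed.

Lemma dot_crossing_dir n a : straddles n a -> dot n (crossing_dir n a) = 0.
Proof.
  intro Hs; destruct (straddles_cases n a Hs) as [(_ & _ & ->) | (_ & _ & ->)];
    unfold arc_comb; autorewrite with vec; ring.
Qed.

Lemma crossing_dir_sqnorm_gt0 n a : valid_arc a -> straddles n a ->
  0 < dot (crossing_dir n a) (crossing_dir n a).
Proof.
  intros Ha Hs; destruct (straddles_cases n a Hs) as [(H1 & H2 & ->) | (H1 & H2 & ->)];
    apply arc_comb_sqnorm_gt0; auto; lra.
Qed.

Lemma crossing_dir_transversal n a : valid_arc a -> straddles n a ->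
  dot (cross (ep1 a) (ep2 a)) (cross n (crossing_dir n a)) <> 0.
Proof.
  intros Ha Hs; pose proof (valid_arc_dot_bounds a Ha) as Hk.
  destruct Ha as (H1 & H2 & _); unfold on_sphere in H1, H2.
  assert (Hpos : 0 < - (dot n (ep1 a) * dot n (ep2 a)) * (1 + dot (ep1 a) (ep2 a)))
    by (unfold straddles in Hs; apply Rmult_lt_0_compat; lra).
  pose proof (Rle_0_sqr (dot n (ep1 a) + dot n (ep2 a))); unfold Rsqr in *.
  destruct (straddles_cases n a Hs) as [(_ & _ & ->) | (_ & _ & ->)];
    rewrite dot_cross_cross; unfold arc_comb; autorewrite with vec;
    rewrite (dot_comm (ep2 a) (ep1 a)), H1, H2, (dot_comm (ep1 a) n), (dot_comm (ep2 a) n); nra.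
Qed.

Lemma arc_circle_point_multiple n a y : straddles n a -> in_arc a y -> dot n y = 0 ->
  exists l, 0 <= l /\ y = vscale l (crossing_dir n a).
Proof.
  unfold straddles, crossing_dir, arc_comb.
  intros Hs (_ & al & be & Hal & Hbe & ->) Hy; autorewrite with vec in Hy.
  set (n1 := dot n (ep1 a)) in *; set (n2 := dot n (ep2 a)) in *.
  assert (HA : 0 < Rabs n2) by (apply Rabs_pos_lt; intro E; rewrite E in Hs; lra).
  assert (Habs : al * Rabs n1 = be * Rabs n2).
  { rewrite <- (Rabs_right al), <- (Rabs_right be), <- !Rabs_mult by lra.
    replace (al * n1) with (- (be * n2)) by lra; apply Rabs_Ropp. }
  exists (al / Rabs n2); split; [apply Rle_mult_inv_pos; lra|].
  replace be with (al / Rabs n2 * Rabs n1) by (apply (Rmult_eq_reg_r (Rabs n2)); [field_simplify|]; lra).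
  V3_ring; field; lra.
Qed.

(* Rational parametrisation of the great circle through [x] with normal [n]:
   [|n| t] is the tangent of half the angle turned from [x]. *)
Definition circle_path (n x : V3) (t : R) : V3 :=
  vscale (/ (1 + dot n n * (t * t)))
    (vadd (vscale (1 - dot n n * (t * t)) x) (vscale (2 * t) (cross n x))).

Lemma circle_path_spec n x v t : on_gc n x -> dot v x = 0 ->
  on_gc n (circle_path n x t) /\
  dot v (circle_path n x t) * (1 + dot n n * (t * t)) = 2 * t * dot v (cross n x) /\
  dot (vsub (circle_path n x t) x) (vsub (circle_path n x t) x) * (1 + dot n n * (t * t))
    = 4 * dot n n * (t * t).
Proof.
  intros (Hx & Hnx) Hvx; unfold on_sphere in Hx.
  assert (Hd : dot (cross n x) (cross n x) = dot n n)
    by (rewrite dot_cross_cross, Hx, Hnx; ring).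
  pose proof (dot_cross_l n x) as Hdn; pose proof (dot_cross_r n x) as Hdx.
  rewrite dot_comm in Hdn, Hdx.
  assert (Hden : 0 < 1 + dot n n * (t * t))
    by (pose proof (dot_self_ge0 n); pose proof (Rle_0_sqr t); unfold Rsqr in *; nra).
  unfold circle_path, on_gc, on_sphere; autorewrite with vec.
  rewrite (dot_comm (cross n x) x), Hx, Hnx, Hvx, Hd, Hdn, Hdx.
  repeat split; field; lra.
Qed.

Lemma great_circle_both_sides n x v eps : on_gc n x -> dot v x = 0 ->
  dot v (cross n x) <> 0 -> 0 < eps ->
  (exists y, on_gc n y /\ Defs.dist y x < eps /\ dot v y > 0) /\
  (exists y, on_gc n y /\ Defs.dist y x < eps /\ dot v y < 0).
Proof.
  intros Hx Hvx Hs Heps.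
  set (K := dot n n); set (tau := eps / (2 * (K + 1))).
  assert (HK : 0 <= K) by apply dot_self_ge0.
  assert (Htau : 0 < tau) by (unfold tau; apply Rdiv_lt_0_compat; lra).
  assert (Htau_eps : 2 * (K + 1) * tau = eps) by (unfold tau; field; lra).
  assert (Hnear : forall t, t * t = tau * tau ->
            on_gc n (circle_path n x t) /\ Defs.dist (circle_path n x t) x < eps /\
            dot v (circle_path n x t) * (1 + K * (t * t)) = 2 * t * dot v (cross n x)).
  { intros t Ht; destruct (circle_path_spec n x v t Hx Hvx) as (Hgc & Hv & Hd); fold K in Hv, Hd.
    split; [exact Hgc | split; [|exact Hv]].
    assert (Hden : 0 < 1 + K * (t * t)) by nra.
    unfold Defs.dist; rewrite <- (sqrt_square eps) by lra; apply sqrt_lt_1_alt.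
    split; [apply dot_self_ge0|]. nra. }
  destruct (Hnear tau eq_refl) as (Hgc1 & Hd1 & Hv1).
  destruct (Hnear (- tau) (ltac:(ring))) as (Hgc2 & Hd2 & Hv2).
  assert (0 < 1 + K * (tau * tau)) by nra.
  replace (- tau * - tau) with (tau * tau) in Hv2 by ring.
  destruct (Rdichotomy _ _ Hs); split;
    [exists (circle_path n x (- tau)) | exists (circle_path n x tau)
    | exists (circle_path n x tau) | exists (circle_path n x (- tau))];
    (split; [assumption | split; [assumption | nra]]).
Qed.

Lemma straddles_crosses a n : valid_arc a -> straddles n a -> crosses a n.
Proof.
  intros Ha Hs.
  pose proof (crossing_dir_sqnorm_gt0 n a Ha Hs) as Hc.
  set (c := crossing_dir n a) in *; set (x := unit c).
  assert (Hx : on_sphere x) by exact (unit_on_sphere c Hc).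
  assert (Hxc : exists l, 0 < l /\ x = vscale l c)
    by (exists (/ sqrt (dot c c)); split; [apply Rinv_0_lt_compat, sqrt_lt_R0|]; auto).
  destruct Hxc as (l & Hl & Hxl).
  assert (Hnx : dot n x = 0)
    by (rewrite Hxl, dot_scaler; unfold c; rewrite dot_crossing_dir by exact Hs; ring).
  assert (Hrel : in_relint a x).
  { destruct (straddles_cases n a Hs) as [(H1 & H2 & Hc') | (H1 & H2 & Hc')];
      unfold x, c; rewrite Hc'; apply unit_arc_comb_relint; auto; lra. }
  exists x; split; [exact Hrel|]; split; [split; assumption|]; split.
  - exists 1; split; [lra|]; intros y Hy (Hys & Hny) _.
    destruct (arc_circle_point_multiple n a y Hs Hy Hny) as (l' & Hl' & Hyl).
    exact (unit_unique c y l' Hys Hl' Hyl).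
  - intros eps Heps; apply great_circle_both_sides; [split; assumption | | | exact Heps].
    + rewrite Hxl, dot_scaler; unfold c, crossing_dir, arc_comb; autorewrite with vec.
      rewrite dot_cross_l, dot_cross_r; ring.
    + replace (cross n x) with (vscale l (cross n c)) by (rewrite Hxl; V3_ring; ring).
      rewrite dot_scaler; apply Rmult_integral_contrapositive_currified; [lra|].
      exact (crossing_dir_transversal n a Ha Hs).
Qed.

Definition arc_on_circle (n : V3) (a : arc) : Prop := dot n (ep1 a) = 0 /\ dot n (ep2 a) = 0.

Lemma pos_comb_eq0 al be x y : 0 < al -> 0 < be -> 0 <= x * y -> al * x + be * y = 0 ->
  x = 0 /\ y = 0.
Proof.
  intros Hal Hbe Hxy E.
  destruct (Rtotal_order x 0) as [Hx | [Hx | Hx]]; destruct (Rtotal_order y 0) as [Hy | [Hy | Hy]];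
    split; nra.
Qed.

Lemma relint_on_circle_cases n a q : in_relint a q -> dot n q = 0 ->
  (straddles n a /\ exists l, 0 <= l /\ q = vscale l (crossing_dir n a)) \/ arc_on_circle n a.
Proof.
  intros Hq Hnq.
  destruct (Rlt_or_le (dot n (ep1 a) * dot n (ep2 a)) 0) as [Hs | Hns].
  - left; split; [exact Hs|]; apply arc_circle_point_multiple; [exact Hs| |exact Hnq].
    destruct Hq as (Hq & al & be & Hal & Hbe & E); split; [exact Hq|].
    exists al, be; repeat split; auto; lra.
  - right; destruct Hq as (_ & al & be & Hal & Hbe & ->); autorewrite with vec in Hnq.
    exact (pos_comb_eq0 _ _ _ _ Hal Hbe Hns Hnq).
Qed.

Lemma list_argmax {A : Type} (l : list A) (P : A -> Prop) (f : A -> R) :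
  (exists x, In x l /\ P x) -> exists p, In p l /\ P p /\ forall q, In q l -> P q -> f q <= f p.
Proof.
  induction l as [| x l IH]; intros (y & Hy & HPy); [destruct Hy|].
  destruct (classic (exists z, In z l /\ P z)) as [Hex | Hnone].
  - destruct (IH Hex) as (p & Hp & HPp & Hmax).
    destruct (classic (P x /\ f p < f x)) as [(HPx & Hlt) | Hnot].
    + exists x; split; [left; reflexivity|]; split; [exact HPx|].
      intros q [<- | Hq] HPq; [lra|]; pose proof (Hmax q Hq HPq); lra.
    + exists p; split; [right; exact Hp|]; split; [exact HPp|].
      intros q [<- | Hq] HPq; [|exact (Hmax q Hq HPq)].
      apply Rnot_lt_le; intro; apply Hnot; auto.
  - destruct Hy as [<- | Hy]; [|exfalso; eauto].
    exists x; split; [left; reflexivity|]; split; [exact HPy|].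
    intros q [<- | Hq] HPq; [lra | exfalso; eauto].
Qed.

Lemma at_most_two {A : Type} (P : A -> Prop) :
  ~ (exists x y z, P x /\ P y /\ P z /\ x <> y /\ x <> z /\ y <> z) ->
  (forall x, ~ P x) \/ exists x y, P x /\ forall z, P z -> z = x \/ z = y.
Proof.
  intro Hfew.
  destruct (classic (exists x, P x)) as [(x & Hx) | Hnone]; [right | left; firstorder].
  destruct (classic (exists y, P y /\ y <> x)) as [(y & Hy & Hyx) | Hone].
  - exists x, y; split; [exact Hx|]; intros z Hz.
    destruct (classic (z = x)); [now left|].
    destruct (classic (z = y)); [now right|].
    exfalso; apply Hfew; exists x, y, z; repeat split; auto.
  - exists x, x; split; [exact Hx|]; intros z Hz; left.
    apply NNPP; intro Hzx; apply Hone; eauto.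
Qed.

Lemma exists_orth n : n <> vzero -> exists m, m <> vzero /\ dot m n = 0.
Proof.
  intro Hn; destruct (classic (vx n = 0 /\ vy n = 0)) as [(Hx & Hy) | Hxy].
  - exists (mkV 1 0 0); split; [intro E; injection E; lra|].
    unfold dot; simpl; rewrite Hx; ring.
  - exists (mkV (- vy n) (vx n) 0); split; [intro E; injection E; intros; apply Hxy; lra|].
    unfold dot; simpl; ring.
Qed.

Lemma exists_orth_nonpos n c1 c2 : n <> vzero -> 0 < dot c1 c1 -> dot n c1 = 0 ->
  exists m, m <> vzero /\ dot m n = 0 /\ dot m c1 = 0 /\ dot m c2 <= 0.
Proof.
  intros Hn Hc1 Hnc1.
  assert (Hm : cross n c1 <> vzero).
  { intro E; assert (Hsq : dot (cross n c1) (cross n c1) = 0) by (rewrite E; unfold dot; simpl; ring).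
    rewrite dot_cross_cross, Hnc1 in Hsq.
    pose proof (Rmult_lt_0_compat _ _ (dot_self_gt0 n Hn) Hc1); lra. }
  destruct (Rle_or_lt (dot (cross n c1) c2) 0);
    [exists (cross n c1) | exists (vopp (cross n c1))];
    repeat split; try apply vopp_neq0; auto; autorewrite with vec;
    rewrite ?dot_cross_l, ?dot_cross_r; lra.
Qed.

Section Diagram.

Variables (D : list arc) (n : V3).
Hypotheses (HD : spherical_diagram D) (Hn : n <> vzero).

Definition endpoint (q : V3) : Prop := exists b, In b D /\ (q = ep1 b \/ q = ep2 b).

Definition endpoint_list : list V3 := flat_map (fun b => ep1 b :: ep2 b :: nil) D.

Lemma In_endpoint_list q : In q endpoint_list <-> endpoint q.
Proof.
  unfold endpoint_list, endpoint; rewrite in_flat_map; simpl.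
  split; intros (b & Hb & Hq); exists b; split; auto; intuition congruence.
Qed.

Lemma endpoint_blocked q : endpoint q -> exists a, In a D /\ in_relint a q.
Proof.
  destruct HD as (_ & _ & _ & Hblk); intros (b & Hb & [-> | ->]);
    destruct (Hblk b Hb) as ((a1 & H1) & (a2 & H2)); eauto.
Qed.

Definition straddler (a : arc) : Prop := In a D /\ straddles n a.

Definition crossings_nonpos (w : V3) : Prop :=
  forall a, straddler a -> dot w (crossing_dir n a) <= 0.

Definition supporting (w : V3) : Prop :=
  crossings_nonpos w /\ forall q, endpoint q -> 0 <= dot n q -> dot w q <= 0.

Lemma circle_endpoint_cases w q : crossings_nonpos w -> endpoint q -> dot n q = 0 ->
  dot w q <= 0 \/ exists a, In a D /\ in_relint a q /\ arc_on_circle n a.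
Proof.
  intros Hcr Hq Hnq; destruct (endpoint_blocked q Hq) as (a & Ha & Hqa).
  destruct (relint_on_circle_cases n a q Hqa Hnq) as [(Hs & l & Hl & ->) | Hflat].
  - left; rewrite dot_scaler; pose proof (Hcr a (conj Ha Hs)); nra.
  - right; exists a; auto.
Qed.

Lemma circle_endpoint_nonpos w q : crossings_nonpos w -> endpoint q -> dot n q = 0 ->
  dot w q <= 0.
Proof.
  intros Hcr Hq Hnq.
  destruct (circle_endpoint_cases w q Hcr Hq Hnq) as [Hw | (a & Ha & Hqa & Hflat)]; [exact Hw|].
  assert (Hends : forall e, e = ep1 a \/ e = ep2 a -> dot w e <= 0).
  { intros e He.
    assert (Hne : dot n e = 0) by (destruct He as [-> | ->]; apply Hflat).
    destruct (circle_endpoint_cases w e Hcr (ex_intro _ a (conj Ha He)) Hne)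
      as [Hw | (b & Hb & Heb & Hbflat)]; [exact Hw|].
    exfalso; apply (coplanar_not_blocks D b a n HD Hb Ha Hn (proj1 Hbflat) (proj2 Hbflat)
                                        (proj1 Hflat) (proj2 Hflat)).
    destruct He as [-> | ->]; [left | right]; exact Heb. }
  destruct Hqa as (_ & al & be & Hal & Hbe & ->); autorewrite with vec.
  pose proof (Hends _ (or_introl eq_refl)); pose proof (Hends _ (or_intror eq_refl)); nra.
Qed.

Lemma touching_arc_in_plane w a p : supporting w -> In a D -> in_relint a p ->
  0 < dot n p -> dot w p = 0 -> dot w (ep1 a) = 0 /\ dot w (ep2 a) = 0.
Proof.
  intros (Hcr & Hhalf) Ha (_ & al & be & Hal & Hbe & ->) Hnp Hwp.
  autorewrite with vec in Hnp, Hwp.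
  assert (Hend : forall e, e = ep1 a \/ e = ep2 a -> 0 <= dot n e -> dot w e <= 0)
    by (intros e He; apply Hhalf; exists a; auto).
  pose proof (Hend _ (or_introl eq_refl)) as H1; pose proof (Hend _ (or_intror eq_refl)) as H2.
  destruct (Rlt_or_le (dot n (ep1 a) * dot n (ep2 a)) 0) as [Hs | Hns].
  - pose proof (Hcr a (conj Ha Hs)) as Hc.
    destruct (straddles_cases n a Hs) as [(Hn1 & Hn2 & E) | (Hn1 & Hn2 & E)];
      rewrite E in Hc; unfold arc_comb in Hc; autorewrite with vec in Hc.
    + specialize (H1 (Rlt_le _ _ Hn1)); nra.
    + specialize (H2 (Rlt_le _ _ Hn2)); nra.
  - assert (0 <= dot n (ep1 a) /\ 0 <= dot n (ep2 a)) as [Hn1 Hn2] by (split; nra).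
    specialize (H1 Hn1); specialize (H2 Hn2); split; nra.
Qed.

Lemma supporting_plane_exists m q0 : m <> vzero -> dot m n = 0 -> crossings_nonpos m ->
  endpoint q0 -> 0 < dot n q0 ->
  exists w p, w <> vzero /\ supporting w /\ endpoint p /\ 0 < dot n p /\ dot w p = 0.
Proof.
  intros Hm Hmn Hcr Hq0 Hnq0.
  destruct (list_argmax endpoint_list (fun q => 0 < dot n q) (fun q => dot m q / dot n q))
    as (p & Hp & Hnp & Hmax); [exists q0; rewrite In_endpoint_list; auto|].
  rewrite In_endpoint_list in Hp.
  set (M := dot m p / dot n p); set (w := vsub m (vscale M n)).
  assert (Hwm : dot w m = dot m m) by (unfold w; autorewrite with vec; rewrite (dot_comm n m), Hmn; ring).
  assert (Hcrw : crossings_nonpos w).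
  { intros a Ha; unfold w; autorewrite with vec; rewrite dot_crossing_dir by apply Ha.
    pose proof (Hcr a Ha); lra. }
  exists w, p; repeat split; auto.
  - intro E; rewrite E in Hwm; pose proof (dot_self_gt0 m Hm).
    unfold dot at 1 in Hwm; simpl in Hwm; lra.
  - intros q Hq [Hnq | Hnq]; [|exact (circle_endpoint_nonpos w q Hcrw Hq (eq_sym Hnq))].
    pose proof (Hmax q (proj2 (In_endpoint_list q) Hq) Hnq) as Hle; cbv beta in Hle; fold M in Hle.
    unfold w; autorewrite with vec.
    apply (Rmult_le_compat_r (dot n q)) in Hle; [|lra].
    replace (dot m q / dot n q * dot n q) with (dot m q) in Hle by (field; lra); lra.
  - unfold w, M; autorewrite with vec; field; lra.
Qed.

Lemma supporting_plane_not_touching w p : w <> vzero -> supporting w -> endpoint p ->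
  0 < dot n p -> dot w p = 0 -> False.
Proof.
  intros Hw Hsup Hp Hnp Hwp.
  destruct (endpoint_blocked p Hp) as (a & Ha & Hpa).
  destruct (touching_arc_in_plane w a p Hsup Ha Hpa Hnp Hwp) as (Hwa1 & Hwa2).
  assert (He : exists e, (e = ep1 a \/ e = ep2 a) /\ 0 < dot n e).
  { destruct Hpa as (_ & al & be & Hal & Hbe & Ep); rewrite Ep in Hnp; autorewrite with vec in Hnp.
    destruct (Rlt_or_le 0 (dot n (ep1 a))); [exists (ep1 a); auto|].
    exists (ep2 a); split; auto; nra. }
  destruct He as (e & He & Hne).
  assert (Hwe : dot w e = 0) by (destruct He as [-> | ->]; assumption).
  destruct (endpoint_blocked e (ex_intro _ a (conj Ha He))) as (b & Hb & Heb).
  destruct (touching_arc_in_plane w b e Hsup Hb Heb Hne Hwe) as (Hwb1 & Hwb2).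
  apply (coplanar_not_blocks D b a w HD Hb Ha Hw Hwb1 Hwb2 Hwa1 Hwa2).
  destruct He as [-> | ->]; [left | right]; exact Heb.
Qed.

Lemma endpoints_below m : m <> vzero -> dot m n = 0 -> crossings_nonpos m ->
  forall q, endpoint q -> dot n q <= 0.
Proof.
  intros Hm Hmn Hcr q Hq; apply Rnot_lt_le; intro Hnq.
  destruct (supporting_plane_exists m q Hm Hmn Hcr Hq Hnq) as (w & p & Hw & Hsup & Hp & Hnp & Hwp).
  exact (supporting_plane_not_touching w p Hw Hsup Hp Hnp Hwp).
Qed.

Lemma endpoints_not_all_on_circle : ~ (forall q, endpoint q -> dot n q = 0).
Proof.
  intro Hall.
  assert (Hb : exists b, In b D) by (destruct HD as (HDne & _); destruct D as [| b l];
                                    [contradiction | exists b; left; reflexivity]).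
  destruct Hb as (b & Hb).
  destruct (endpoint_blocked (ep1 b) (ex_intro _ b (conj Hb (or_introl eq_refl)))) as (a & Ha & Hba).
  assert (Hon : forall c, In c D -> arc_on_circle n c)
    by (intros c Hc; split; apply Hall; exists c; auto).
  destruct (Hon a Ha), (Hon b Hb).
  apply (coplanar_not_blocks D a b n HD Ha Hb Hn); auto; left; exact Hba.
Qed.

Lemma separating_direction :
  ~ (exists a1 a2 a3, straddler a1 /\ straddler a2 /\ straddler a3 /\
                      a1 <> a2 /\ a1 <> a3 /\ a2 <> a3) ->
  exists m, m <> vzero /\ dot m n = 0 /\ crossings_nonpos m.
Proof.
  intro Hfew; destruct (at_most_two straddler Hfew) as [Hnone | (a1 & a2 & (Ha1 & Hs1) & Hall)].
  - destruct (exists_orth n Hn) as (m & Hm & Hmn); exists m; repeat split; auto.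
    intros a Ha; destruct (Hnone a Ha).
  - destruct HD as (_ & Hval & _).
    destruct (exists_orth_nonpos n (crossing_dir n a1) (crossing_dir n a2) Hn
                (crossing_dir_sqnorm_gt0 n a1 (Hval a1 Ha1) Hs1) (dot_crossing_dir n a1 Hs1))
      as (m & Hm & Hmn & H1 & H2).
    exists m; repeat split; auto.
    intros a Ha; destruct (Hall a Ha) as [-> | ->]; lra.
Qed.

End Diagram.

Lemma crossings_nonpos_opp D n m : crossings_nonpos D n m -> crossings_nonpos D (vopp n) m.
Proof.
  intros Hcr a (Ha & Hs); rewrite crossing_dir_opp; apply Hcr; split; [exact Ha|].
  now apply straddles_opp.
Qed.

Theorem mainTheorem17 (D : list arc) (HD : spherical_diagram D) (n : V3) (Hn : n <> vzero) :
  exists a1 a2 a3, In a1 D /\ In a2 D /\ In a3 D /\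
    a1 <> a2 /\ a1 <> a3 /\ a2 <> a3 /\
    crosses a1 n /\ crosses a2 n /\ crosses a3 n.
Proof.
  destruct (classic (exists a1 a2 a3, straddler D n a1 /\ straddler D n a2 /\ straddler D n a3 /\
                                      a1 <> a2 /\ a1 <> a3 /\ a2 <> a3)) as [Hthree | Hfew].
  - destruct Hthree as (a1 & a2 & a3 & (H1 & S1) & (H2 & S2) & (H3 & S3) & N12 & N13 & N23).
    destruct HD as (_ & Hval & _).
    exists a1, a2, a3; repeat split; auto; apply straddles_crosses; auto.
  - exfalso.
    destruct (separating_direction D n HD Hn Hfew) as (m & Hm & Hmn & Hcr).
    apply (endpoints_not_all_on_circle D n HD Hn); intros q Hq; apply Rle_antisym.
    + exact (endpoints_below D n HD Hn m Hm Hmn Hcr q Hq).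
    + assert (Hmn' : dot m (vopp n) = 0) by (rewrite dot_oppr, Hmn; ring).
      pose proof (endpoints_below D (vopp n) HD (vopp_neq0 n Hn) m Hm Hmn'
                    (crossings_nonpos_opp D n m Hcr) q Hq) as Hle.
      rewrite dot_oppl in Hle; lra.
Qed.
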